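(* Let $\rho\in(0,1]$, $r,h,p,q\in\mathbb{N}$ with $r\geq 2$, and let $\mathcal{N}$ be a support-preserving Euclidean $\rho$-net on the set of all $h$-sparse unit vectors in $\mathbb{R}^q$. Let $T$ be any $p\times q$ real matrix. Then $$\sup_{\substack{u\in S^{q-1},\\|\mathrm{supp}\,u|\leq h}}\textstyle\max^{(r)}_{\ell\in[p]}|Tu|_\ell\leq 2\sup_{v\in\mathcal{N}}\max^{(\lfloor r/2\rfloor)}_{\ell\in[p]}|Tv|_\ell+\frac{4\rho}{\sqrt{r}}\sup_{\substack{u\in S^{q-1},\\|\mathrm{supp}\,u|\leq h}}\Bigl(\sum_{i=1}^r\bigl(\max^{(i)}_{\ell\in[p]}|Tu|_\ell\bigr)^2\Bigr)^{1/2}.$$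
   Context: A vector is $h$-sparse if it has at most $h$ nonzero coordinates. A subset $\mathcal{N}$ of a set $S\subset\mathbb{R}^q$ is a support-preserving Euclidean $\rho$-net in $S$ if for every $x\in S$ there is $y\in\mathcal{N}$ with $\mathrm{supp}\,y\subset\mathrm{supp}\,x$ and $\|x-y\|\leq\rho$. For $v\in\mathbb{R}^p$, $|v|_\ell$ is the absolute value of its $\ell$-th coordinate. For a non-negative sequence $(a_\ell)_{\ell\in J}$ and $k\in\mathbb{N}$, $\max^{(k)}_{\ell\in J}a_\ell$ denotes its $k$-th largest element ($0$ if $k>|J|$). *)

From HB Require Import structures.
From mathcomp Require Import all_boot all_order all_algebra.
From mathcomp Require Import all_classical all_reals.
Set Implicit Arguments. Unset Strict Implicit. Unset Printing Implicit Defensive.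
Import Order.TTheory GRing.Theory Num.Theory.
Local Open Scope ring_scope.
Local Open Scope classical_set_scope.

Definition enorm (R : realType) (q : nat) (v : 'cV[R]_q) : R :=
  Num.sqrt (\sum_(i < q) (v i 0) ^+ 2).

Definition supp (R : realType) (q : nat) (v : 'cV[R]_q) : {set 'I_q} :=
  [set i | v i 0 != 0].

Definition sparse (R : realType) (q h : nat) (v : 'cV[R]_q) : bool :=
  (#|supp v| <= h)%N.

Definition sparse_sphere (R : realType) (q h : nat) : set 'cV[R]_q :=
  [set u | enorm u = 1 /\ sparse h u].

Definition sp_net (R : realType) (q : nat) (rho : R)
    (S N : set 'cV[R]_q) : Prop :=
  N `<=` S /\
  forall x, S x -> exists y, N y /\ supp y \subset supp x /\ enorm (x - y) <= rho.

(* k-th largest element of a (non-negative) family (a_l)_{l in 'I_p};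
   0 if k > p.  (k = 0 is never used; it is given the value 0.) *)
Definition kmax (R : realType) (p : nat) (k : nat) (a : 'I_p -> R) : R :=
  if k is k'.+1 then nth 0 (sort (fun x y : R => y <= x) [seq a l | l <- enum 'I_p]) k'
  else 0.

Definition absTu (R : realType) (p q : nat) (T : 'M[R]_(p, q)) (u : 'cV[R]_q)
  : 'I_p -> R := fun l => `|(T *m u) l 0|.

From HB Require Import structures.
From mathcomp Require Import all_boot all_order all_algebra.
From mathcomp Require Import all_classical all_reals.
From mathcomp Require Import zify lra.
Import Order.TTheory GRing.Theory Num.Theory.
Set Implicit Arguments. Unset Strict Implicit. Unset Printing Implicit Defensive.
Local Open Scope ring_scope.
Local Open Scope classical_set_scope.

(* For u in the sparse sphere take a net point y with supp y \subset supp u and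
   |u - y| <= rho.  Coordinatewise |Tu| <= |Ty| + |T(u - y)|, so the r-th largest
   entry of |Tu| is at most the (r/2)-th largest entry of |Ty| plus the k-th
   largest entry of |T(u - y)|, where k = r + 1 - r/2.  As u - y is h-sparse it is
   |u - y| times a point w of the sparse sphere, and k times the square of the k-th
   largest entry of |Tw| is at most the sum of the squares of its r largest
   entries; since r <= 2k this yields the second term. *)

Section DecreasingSequences.
Variable R : realDomainType.
Local Notation ger := (fun x y : R => y <= x).
Implicit Types (s : seq R) (t : R).

Lemma path_ger_le_head x s : path ger x s -> all (fun y => y <= x) s.
Proof. by apply: order_path_min => y z w /= zy wz; apply: le_trans wz zy. Qed.

Lemma count_gt_nth_sorted s k : sorted ger s -> (count (fun x => nth 0 s k < x)%R s <= k)%N.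
Proof.
elim: s k => [|x s IHs] [|k] //= sorted_xs.
- rewrite ltxx add0n leqn0 -/(nilp _) eqn0Ngt -has_count; apply/hasPn => y.
  by move/(allP (path_ger_le_head sorted_xs)) => /= yx; rewrite -leNgt.
- by have := IHs k (path_sorted sorted_xs); case: (_ < x) => /=; lia.
Qed.

Lemma nth_sorted_le s t k : sorted ger s -> 0 <= t ->
  (count (fun x => t < x)%R s <= k)%N -> nth 0 s k <= t.
Proof.
move=> + t_ge0; elim: s k => [|x s IHs] [|k] sorted_xs //=; rewrite ?nth_nil //.
- by case: ltP.
- case: ltP => /= [_ cnt|xt _]; first exact: IHs (path_sorted sorted_xs) cnt.
  have [ks|] := ltnP k (size s); last by move=> ?; rewrite nth_default.
  by apply: le_trans xt; apply: (allP (path_ger_le_head sorted_xs)); apply: mem_nth.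
Qed.

End DecreasingSequences.

Section OrderStatistics.
Variables (R : realType) (p : nat).
Local Notation ger := (fun x y : R => y <= x).
Implicit Types (a b c : 'I_p -> R) (t : R).

Lemma card_gt_sort a t :
  #|[pred l | t < a l]| =
  count (fun x => t < x) (sort ger [seq a l | l <- enum 'I_p]).
Proof. by rewrite (permP (permEl (perm_sort _ _))) count_map cardE size_filter enumT. Qed.

Lemma sort_ger_sorted (s : seq R) : sorted ger (sort ger s).
Proof. by apply: sort_sorted => x y; rewrite orbC le_total. Qed.

Lemma card_gt_kmax a k : (0 < k)%N -> (#|[pred l | (kmax k a < a l)%R]| < k)%N.
Proof. by case: k => // k _; rewrite card_gt_sort ltnS count_gt_nth_sorted ?sort_ger_sorted. Qed.

Lemma kmax_le a k t : 0 <= t -> (#|[pred l | (t < a l)%R]| < k)%N -> kmax k a <= t.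
Proof.
case: k => // k t_ge0; rewrite card_gt_sort ltnS => cnt.
exact: nth_sorted_le (sort_ger_sorted _) t_ge0 cnt.
Qed.

Lemma kmax_ge0 a k : (forall l, 0 <= a l) -> 0 <= kmax k a.
Proof.
case: k => [//|k] a_ge0 /=; set s := sort _ _.
have [ks|] := ltnP k (size s); last by move=> ?; rewrite nth_default.
by have := mem_nth 0 ks; rewrite mem_sort => /mapP [l _ ->].
Qed.

Lemma kmax_le_bound a k t : 0 <= t -> (forall l, a l <= t) -> kmax k a <= t.
Proof.
case: k => [//|k] t_ge0 a_le; apply: kmax_le => //.
by rewrite ltnS eq_card0 // => l; rewrite !inE ltNge a_le.
Qed.

Lemma kmax_nonincreasing a i j : (forall l, 0 <= a l) -> (0 < i <= j)%N ->
  kmax j a <= kmax i a.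
Proof.
move=> a_ge0 /andP[i_gt0 ij]; apply: kmax_le; first exact: kmax_ge0.
exact: leq_trans (card_gt_kmax a i_gt0) ij.
Qed.

Lemma kmax_scale_le a k s : 0 < s -> (forall l, 0 <= a l) ->
  kmax k (fun l => s * a l) <= s * kmax k a.
Proof.
case: k => [|k] s_gt0 a_ge0; first by rewrite mulr0.
apply: kmax_le; first by apply: mulr_ge0; [apply: ltW | apply: kmax_ge0].
suff -> : #|[pred l | s * kmax k.+1 a < s * a l]| = #|[pred l | kmax k.+1 a < a l]|.
  exact: card_gt_kmax.
by apply: eq_card => l; rewrite !inE ltr_pM2l.
Qed.

Lemma kmax_add_le a b c k1 k2 : (0 < k1)%N -> (0 < k2)%N ->
  (forall l, 0 <= a l) -> (forall l, 0 <= b l) -> (forall l, c l <= a l + b l) ->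
  kmax (k1 + k2).-1 c <= kmax k1 a + kmax k2 b.
Proof.
move=> k1_gt0 k2_gt0 a_ge0 b_ge0 c_le.
apply: kmax_le; first by rewrite addr_ge0 ?kmax_ge0.
set A := [pred l | kmax k1 a < a l]; set B := [pred l | kmax k2 b < b l].
have cardAB : (#|[pred l | (kmax k1 a + kmax k2 b < c l)%R]| <= #|A| + #|B|)%N.
  rewrite -cardUI; apply: leq_trans (leq_addr _ _); apply: subset_leq_card.
  apply/fintype.subsetP => l; rewrite !inE; apply: contraLR; rewrite negb_or -!leNgt.
  by case/andP=> al bl; apply: le_trans (c_le l) _; apply: lerD.
have := card_gt_kmax a k1_gt0; have := card_gt_kmax b k2_gt0.
rewrite -/A -/B; move: cardAB; move: (#|A|) (#|B|) (#|_|) => m n o; lia.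
Qed.

Lemma kmax_sqr_le_sum a k r : (forall l, 0 <= a l) -> (0 < k <= r)%N ->
  k%:R * kmax k a ^+ 2 <= \sum_(1 <= i < r.+1) kmax i a ^+ 2.
Proof.
move=> a_ge0 /andP[k_gt0 kr].
rewrite (@big_cat_nat _ _ _ k.+1) //= -[leLHS]addr0; apply: lerD.
  have -> : k%:R * kmax k a ^+ 2 = \sum_(1 <= i < k.+1) kmax k a ^+ 2.
    by rewrite sumr_const_nat subn1 mulr_natl.
  apply: ler_sum_nat => i /andP[i_gt0 ik].
  by rewrite lerXn2r ?nnegrE ?kmax_ge0 // kmax_nonincreasing // i_gt0 -ltnS.
by apply: sumr_ge0 => i _; apply: sqr_ge0.
Qed.

Lemma sqrt_mul_kmax_le a k r : (forall l, 0 <= a l) -> (0 < k <= r)%N ->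
  Num.sqrt k%:R * kmax k a <= Num.sqrt (\sum_(1 <= i < r.+1) kmax i a ^+ 2).
Proof.
move=> a_ge0 kr; rewrite -[kmax k a]ger0_norm ?kmax_ge0 // -sqrtr_sqr -sqrtrM ?ler0n //.
by rewrite ler_sqrt ?kmax_sqr_le_sum // sumr_ge0 // => i _; apply: sqr_ge0.
Qed.

End OrderStatistics.

Lemma sup_ge0 (R : realType) (E : set R) : (forall x, E x -> 0 <= x) -> 0 <= sup E.
Proof.
move=> E_ge0; have [[[x Ex] E_ub]|no_sup] := pselect (has_sup E).
  exact: le_trans (E_ge0 x Ex) (ub_le_sup E_ub Ex).
by rewrite sup_out.
Qed.

Lemma sup_le_ub (R : realType) (E : set R) b : 0 <= b -> (forall x, E x -> x <= b) ->
  sup E <= b.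
Proof.
move=> b_ge0 E_le; have [E_ne|E_empty] := pselect (E !=set0); first exact: ge_sup.
suff -> : E = set0 by rewrite sup0.
by apply/seteqP; split=> // x Ex; apply: E_empty; exists x.
Qed.

Lemma sqrt_le_twice_sqrt (R : realType) m n : (m <= 4 * n)%N ->
  Num.sqrt m%:R <= 2 * Num.sqrt n%:R :> R.
Proof.
rewrite -(ler_nat R) natrM => mn; have := sqr_sqrtr (ler0n R m); have := sqr_sqrtr (ler0n R n).
have := sqrtr_ge0 (m%:R : R); have := sqrtr_ge0 (n%:R : R); nra.
Qed.

Section EuclideanNorm.
Variables (R : realType) (q : nat).
Implicit Types (u v x y : 'cV[R]_q).

Lemma enorm_ge0 v : 0 <= enorm v.
Proof. exact: sqrtr_ge0. Qed.

Lemma enorm0 : enorm (0 : 'cV[R]_q) = 0.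
Proof. by rewrite /enorm big1 ?sqrtr0 // => i _; rewrite mxE expr0n. Qed.

Lemma enormZ (c : R) v : enorm (c *: v) = `|c| * enorm v.
Proof.
rewrite /enorm -sqrtr_sqr -sqrtrM ?sqr_ge0 // mulr_sumr.
by congr Num.sqrt; apply: eq_bigr => i _; rewrite mxE exprMn.
Qed.

Lemma normr_coord_le_enorm v i : `|v i 0| <= enorm v.
Proof.
have sq_coord_ge0 (j : 'I_q) : 0 <= v j 0 ^+ 2 := sqr_ge0 _.
rewrite -sqrtr_sqr ler_sqrt ?sumr_ge0 // (bigD1 i) //= lerDl.
exact: sumr_ge0.
Qed.

Lemma enorm_gt0 v : v != 0 -> 0 < enorm v.
Proof.
apply: contraNT; rewrite -leNgt => v_le0; apply/eqP/matrixP => i j.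
rewrite (ord1 j) mxE; apply/normr0_eq0/le_anti.
by rewrite normr_ge0 (le_trans (normr_coord_le_enorm v i)).
Qed.

Lemma supp_scale (c : R) v : c != 0 -> supp (c *: v) = supp v.
Proof. by move=> c0; apply/setP => i; rewrite !inE mxE mulf_eq0 negb_or c0. Qed.

Lemma supp_subB u y : supp y \subset supp u -> supp (u - y) \subset supp u.
Proof.
move=> yu; apply/fintype.subsetP => i; rewrite !inE !mxE; apply: contraNN => /eqP ui.
have /eqP yi : y i 0 == 0.
  by apply: contraT => yi; have := fintype.subsetP yu i; rewrite !inE ui eqxx yi => /(_ isT).
by rewrite ui yi subrr.
Qed.

Lemma sparse_subset h x u : supp x \subset supp u -> sparse h u -> sparse h x.
Proof. by move=> xu; apply: leq_trans (subset_leq_card xu). Qed.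

Lemma normalize_sparse_sphere h v : v != 0 -> sparse h v ->
  sparse_sphere h ((enorm v)^-1 *: v).
Proof.
move=> v0 v_sparse; have nv_gt0 := enorm_gt0 v0; split.
  by rewrite enormZ ger0_norm ?invr_ge0 ?ltW // mulVf ?gt_eqF.
by rewrite /sparse supp_scale ?invr_eq0 ?gt_eqF.
Qed.

End EuclideanNorm.

Section ImageCoordinates.
Variables (R : realType) (p q : nat) (T : 'M[R]_(p, q)).
Implicit Types (u v : 'cV[R]_q).

Lemma absTu_ge0 v l : 0 <= absTu T v l.
Proof. exact: normr_ge0. Qed.

Lemma absTuZ (c : R) v : absTu T (c *: v) = (fun l => `|c| * absTu T v l).
Proof. by apply/funext => l; rewrite /absTu -scalemxAr mxE normrM. Qed.

Lemma absTuD_le u v l : absTu T (u + v) l <= absTu T u l + absTu T v l.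
Proof. by rewrite /absTu mulmxDr mxE ler_normD. Qed.

Lemma absTu_le_unit v l : enorm v = 1 -> absTu T v l <= \sum_i \sum_j `|T i j|.
Proof.
move=> v1; rewrite /absTu mxE; apply: le_trans (ler_norm_sum _ _ _) _.
apply: (@le_trans _ _ (\sum_j `|T l j|)).
  apply: ler_sum => j _; rewrite normrM ler_piMr //.
  by rewrite -v1 normr_coord_le_enorm.
rewrite (bigD1 l) //= lerDl; apply: sumr_ge0 => i _.
by apply: sumr_ge0 => j _; apply: normr_ge0.
Qed.

Lemma kmax_absTu_le_unit k v : enorm v = 1 -> kmax k (absTu T v) <= \sum_i \sum_j `|T i j|.
Proof.
move=> v1; apply: kmax_le_bound; last by move=> l; apply: absTu_le_unit.
by apply: sumr_ge0 => i _; apply: sumr_ge0 => j _; apply: normr_ge0.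
Qed.

Lemma has_ubound_kmax_absTu k (N : set 'cV[R]_q) : (forall v, N v -> enorm v = 1) ->
  has_ubound [set kmax k (absTu T v) | v in N].
Proof.
by move=> N1; exists (\sum_i \sum_j `|T i j|) => _ [v Nv <-]; apply/kmax_absTu_le_unit/N1.
Qed.

Lemma has_ubound_energy r (N : set 'cV[R]_q) : (forall v, N v -> enorm v = 1) ->
  has_ubound [set Num.sqrt (\sum_(1 <= i < r.+1) kmax i (absTu T v) ^+ 2) | v in N].
Proof.
move=> N1; exists (Num.sqrt (\sum_(1 <= i < r.+1) (\sum_i \sum_j `|T i j|) ^+ 2)).
move=> _ [v Nv <-]; rewrite ler_sqrt; last by apply: sumr_ge0 => i _; apply: sqr_ge0.
apply: ler_sum_nat => i _; rewrite lerXn2r ?nnegrE ?kmax_ge0 ?kmax_absTu_le_unit ?N1 //.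
  exact: absTu_ge0.
by apply: le_trans (kmax_absTu_le_unit i (N1 v Nv)); apply/kmax_ge0/absTu_ge0.
Qed.

Lemma sqrt_mul_kmax_absTu_le h r k x : (0 < k <= r)%N -> sparse h x ->
  Num.sqrt k%:R * kmax k (absTu T x)
  <= enorm x * sup [set Num.sqrt (\sum_(1 <= i < r.+1) kmax i (absTu T u) ^+ 2)
                    | u in sparse_sphere h].
Proof.
move=> kr x_sparse; have [->|x0] := eqVneq x 0.
  rewrite enorm0 mul0r mulr_ge0_le0 ?sqrtr_ge0 // kmax_le_bound // => l.
  by rewrite /absTu mulmx0 mxE normr0.
have x_gt0 := enorm_gt0 x0; set w := (enorm x)^-1 *: x.
have Sw : sparse_sphere h w := normalize_sparse_sphere x0 x_sparse.
have -> : x = enorm x *: w by rewrite scalerA mulfV ?gt_eqF ?scale1r.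
rewrite absTuZ enormZ ger0_norm ?enorm_ge0 // (proj1 Sw) mulr1.
apply: le_trans (_ : enorm x * (Num.sqrt k%:R * kmax k (absTu T w)) <= _).
  by rewrite mulrCA; apply/ler_wpM2l/kmax_scale_le/absTu_ge0; rewrite ?sqrtr_ge0.
rewrite ler_pM2l //; apply: le_trans (sqrt_mul_kmax_le (absTu_ge0 w) kr) _.
by apply: ub_le_sup; [apply: has_ubound_energy => v [] | exists w].
Qed.

Lemma kmax_le_net_point h r u y : (2 <= r)%N -> sparse_sphere h u -> supp y \subset supp u ->
  kmax r (absTu T u)
  <= kmax r./2 (absTu T y)
     + 2 * enorm (u - y) / Num.sqrt r%:R
       * sup [set Num.sqrt (\sum_(1 <= i < r.+1) kmax i (absTu T v) ^+ 2)
              | v in sparse_sphere h].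
Proof.
move=> r_ge2 [_ u_sparse] yu; set k2 := (r.+1 - r./2)%N.
have r_half_gt0 : (0 < r./2)%N by rewrite half_gt0.
have k2_le_r : (0 < k2 <= r)%N by rewrite /k2; move: (odd_double_half r); lia.
have u_split l : absTu T u l <= absTu T y l + absTu T (u - y) l.
  by apply: le_trans (absTuD_le _ _ _); rewrite [y + _]addrC subrK.
have := kmax_add_le r_half_gt0 (proj1 (andP k2_le_r)) (absTu_ge0 y) (absTu_ge0 (u - y)) u_split.
have -> : (r./2 + k2).-1 = r by rewrite /k2; move: (odd_double_half r); lia.
move/le_trans; apply; rewrite lerD2l.
have := sqrt_mul_kmax_absTu_le k2_le_r (sparse_subset (supp_subB yu) u_sparse).
set K := kmax k2 _; set M := sup _ => K_le.
have K_ge0 : 0 <= K by apply/kmax_ge0/absTu_ge0.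
have sqrt_r_le : Num.sqrt r%:R <= 2 * Num.sqrt k2%:R :> R.
  by apply: sqrt_le_twice_sqrt; rewrite /k2; move: (odd_double_half r); lia.
rewrite mulrAC ler_pdivlMr ?sqrtr_gt0 ?ltr0n; last lia.
have := sqrtr_ge0 (k2%:R : R); nra.
Qed.

End ImageCoordinates.

Theorem lemma4p3 (R : realType) (rho : R) (r h p q : nat)
    (N : set 'cV[R]_q) (T : 'M[R]_(p, q)) :
  0 < rho -> rho <= 1 -> (2 <= r)%N ->
  @sp_net R q rho (@sparse_sphere R q h) N ->
  sup [set kmax r (absTu T u) | u in @sparse_sphere R q h]
  <= 2 * sup [set kmax r./2 (absTu T v) | v in N]
     + 4 * rho / Num.sqrt (r%:R)
       * sup [set Num.sqrt (\sum_(1 <= i < r.+1) (kmax i (absTu T u)) ^+ 2)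
              | u in @sparse_sphere R q h].
Proof.
move=> rho_gt0 _ r_ge2 [N_sub net].
set A := sup [set kmax r./2 _ | v in N]; set M := sup [set Num.sqrt _ | u in _].
have A_ge0 : 0 <= A by apply: sup_ge0 => _ [v _ <-]; apply/kmax_ge0/absTu_ge0.
have M_ge0 : 0 <= M by apply: sup_ge0 => _ [v _ <-]; apply: sqrtr_ge0.
have sqrt_r_gt0 : 0 < Num.sqrt (r%:R : R) by rewrite sqrtr_gt0 ltr0n; lia.
have coef_ge0 : 0 <= 4 * rho / Num.sqrt r%:R.
  by rewrite divr_ge0 ?(ltW sqrt_r_gt0) // mulr_ge0 // ltW.
apply: sup_le_ub; first by apply: addr_ge0; apply: mulr_ge0; rewrite ?ler0n.
move=> _ [u Su <-]; have [y [Ny [yu uy_le]]] := net u Su.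
apply: le_trans (kmax_le_net_point T r_ge2 Su yu) _; rewrite -/M; apply: lerD.
  have : kmax r./2 (absTu T y) <= A.
    by apply: ub_le_sup; [apply: has_ubound_kmax_absTu => v /N_sub [] | exists y].
  by move: A_ge0; lra.
rewrite ler_wpM2r // ler_pM2r ?invr_gt0 //; lra.
Qed.
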